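(* Let $(W,\cdot,\iota)$ be any constraint domain. In the HyLL sequent calculus (which has no cut rule), for all sets $\Gamma$ and multisets $\Delta,\Delta'$ of judgements, propositions $A,C$ and worlds $u,w$: (1) if $\Gamma;\Delta\Rightarrow A@u$ and $\Gamma;\Delta',A@u\Rightarrow C@w$ are derivable, then $\Gamma;\Delta,\Delta'\Rightarrow C@w$ is derivable; (2) if $\Gamma;\cdot\Rightarrow A@u$ and $\Gamma,A@u;\Delta\Rightarrow C@w$ are derivable, then $\Gamma;\Delta\Rightarrow C@w$ is derivable.
   Context: HyLL (hybrid linear logic). A constraint domain is a monoid $(W,\cdot,\iota)$; its elements are called worlds. World expressions are built from elements of $W$, world variables $u,v,\dots$ and $\cdot$, and are considered up to the monoid equations. Terms are untyped first-order terms built from term variables $x,y,\dots$ and function symbols; world variables never occur in terms and term variables never occur in worlds. Propositions: $A,B ::= a\,\vec t \mid A\otimes B\mid \mathbf 1\mid A\multimap B\mid A\,\&\,B\mid \top\mid A\oplus B\mid \mathbf 0\mid\ !A\mid \forall x.A\mid \exists x.A\mid (A\ \mathsf{at}\ w)\mid \downarrow u.A\mid \forall u.A\mid\exists u.A$, where $a\,\vec t$ is an atomic predicate applied to terms, $x$ a term variable, $u$ a world variable (bound in $\downarrow u.A,\forall u.A,\exists u.A$), and $w$ a world expression. $\alpha$ ranges over variables of either kind, $\tau$ over terms or worlds accordingly, $[\tau/\alpha]A$ is capture-avoiding substitution; propositions are taken up to $\alpha$-conversion. A judgement is $A@w$. A sequent is $\Gamma;\Delta\Rightarrow C@w$ with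 $\Gamma$ a set of judgements (unrestricted context) and $\Delta$ a multiset of judgements (linear context). Derivable sequents are those generated by the rules (premises $\Longrightarrow$ conclusion): init: $\Gamma; a\,\vec t@u\Rightarrow a\,\vec t@u$. copy: $\Gamma,A@u;\Delta,A@u\Rightarrow C@w \Longrightarrow \Gamma,A@u;\Delta\Rightarrow C@w$. $\otimes$R: $\Gamma;\Delta\Rightarrow A@w$ and $\Gamma;\Delta'\Rightarrow B@w\Longrightarrow\Gamma;\Delta,\Delta'\Rightarrow A\otimes B@w$. $\otimes$L: $\Gamma;\Delta,A@u,B@u\Rightarrow C@w\Longrightarrow\Gamma;\Delta,A\otimes B@u\Rightarrow C@w$. $\mathbf1$R: $\Gamma;\cdot\Rightarrow \mathbf 1@w$. $\mathbf 1$L: $\Gamma;\Delta\Rightarrow C@w\Longrightarrow\Gamma;\Delta,\mathbf 1@u\Rightarrow C@w$. $\multimap$R: $\Gamma;\Delta,A@w\Rightarrow B@w\Longrightarrow\Gamma;\Delta\Rightarrow A\multimap B@w$. $\multimap$L: $\Gamma;\Delta\Rightarrow A@u$ and $\Gamma;\Delta',B@u\Rightarrow C@w\Longrightarrow\Gamma;\Delta,\Delta',A\multimap B@u\Rightarrow C@w$. $\top$R: $\Gamma;\Delta\Rightarrow\top@w$. $\mathbf 0$L: $\Gamma;\Delta,\mathbf 0@u\Rightarrow C@w$. $\&$R: $\Gamma;\Delta\Rightarrow A@w$ and $\Gamma;\Delta\Rightarrow B@w\Longrightarrow\Gamma;\Delta\Rightarrow A\&B@w$. $\&$L$_i$ ($i=1,2$):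 $\Gamma;\Delta,A_i@u\Rightarrow C@w\Longrightarrow\Gamma;\Delta,A_1\&A_2@u\Rightarrow C@w$. $\oplus$R$_i$: $\Gamma;\Delta\Rightarrow A_i@w\Longrightarrow\Gamma;\Delta\Rightarrow A_1\oplus A_2@w$. $\oplus$L: $\Gamma;\Delta,A@u\Rightarrow C@w$ and $\Gamma;\Delta,B@u\Rightarrow C@w\Longrightarrow\Gamma;\Delta,A\oplus B@u\Rightarrow C@w$. $\forall$R: $\Gamma;\Delta\Rightarrow A@w\Longrightarrow\Gamma;\Delta\Rightarrow\forall\alpha.A@w$ ($\alpha$ fresh for the conclusion). $\forall$L: $\Gamma;\Delta,[\tau/\alpha]A@u\Rightarrow C@w\Longrightarrow\Gamma;\Delta,\forall\alpha.A@u\Rightarrow C@w$. $\exists$R: $\Gamma;\Delta\Rightarrow[\tau/\alpha]A@w\Longrightarrow\Gamma;\Delta\Rightarrow\exists\alpha.A@w$. $\exists$L: $\Gamma;\Delta,A@u\Rightarrow C@w\Longrightarrow\Gamma;\Delta,\exists\alpha.A@u\Rightarrow C@w$ ($\alpha$ fresh for the conclusion). $!$R: $\Gamma;\cdot\Rightarrow A@w\Longrightarrow\Gamma;\cdot\Rightarrow\ !A@w$. $!$L: $\Gamma,A@u;\Delta\Rightarrow C@w\Longrightarrow\Gamma;\Delta,!A@u\Rightarrow C@w$. $\mathsf{at}$R: $\Gamma;\Delta\Rightarrow A@u\Longrightarrow\Gamma;\Delta\Rightarrow(A\ \mathsf{at}\ u)@v$. $\mathsf{at}$L: $\Gamma;\Delta,A@u\Rightarrow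 C@w\Longrightarrow\Gamma;\Delta,(A\ \mathsf{at}\ u)@v\Rightarrow C@w$. $\downarrow$R: $\Gamma;\Delta\Rightarrow[w/u]A@w\Longrightarrow\Gamma;\Delta\Rightarrow\downarrow u.A@w$. $\downarrow$L: $\Gamma;\Delta,[v/u]A@v\Rightarrow C@w\Longrightarrow\Gamma;\Delta,\downarrow u.A@v\Rightarrow C@w$. *)

From Stdlib Require Import List Permutation.
Import ListNotations.
Set Implicit Arguments.

Record cdomain := {
  wcar :> Type;
  wmul : wcar -> wcar -> wcar;
  wunit : wcar;
  wassoc : forall a b c, wmul a (wmul b c) = wmul (wmul a b) c;
  wunitl : forall a, wmul wunit a = a;
  wunitr : forall a, wmul a wunit = a }.

Section HyLL.
Context (D : cdomain) (Fs Ps : Type).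
(* Fs : function symbols, Ps : predicate symbols *)

(* Untyped first-order terms; term variables are de Bruijn indices. *)
Inductive tm : Type :=
| TVar : nat -> tm
| TApp : Fs -> list tm -> tm.

Fixpoint tsubst (s : nat -> tm) (t : tm) : tm :=
  match t with
  | TVar n => s n
  | TApp f ts => TApp f (map (tsubst s) ts)
  end.

Definition tshift (t : tm) : tm := tsubst (fun n => TVar (S n)) t.
Definition tup (s : nat -> tm) : nat -> tm :=
  fun n => match n with 0 => TVar 0 | S m => tshift (s m) end.
Definition tsingle (t : tm) : nat -> tm :=
  fun n => match n with 0 => t | S m => TVar m end.

Inductive wexp : Type :=
| WC : wcar D -> wexp
| WV : nat -> wexp
| WM : wexp -> wexp -> wexp.

Fixpoint wsubst (s : nat -> wexp) (e : wexp) : wexp :=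
  match e with
  | WC a => WC a
  | WV n => s n
  | WM e1 e2 => WM (wsubst s e1) (wsubst s e2)
  end.

Definition wshift (e : wexp) : wexp := wsubst (fun n => WV (S n)) e.
Definition wup (s : nat -> wexp) : nat -> wexp :=
  fun n => match n with 0 => WV 0 | S m => wshift (s m) end.
Definition wsingle (e : wexp) : nat -> wexp :=
  fun n => match n with 0 => e | S m => WV m end.

Inductive weq : wexp -> wexp -> Prop :=
| weq_refl : forall e, weq e e
| weq_sym : forall e1 e2, weq e1 e2 -> weq e2 e1
| weq_trans : forall e1 e2 e3, weq e1 e2 -> weq e2 e3 -> weq e1 e3
| weq_cong : forall e1 e1' e2 e2', weq e1 e1' -> weq e2 e2' ->
    weq (WM e1 e2) (WM e1' e2')
| weq_assoc : forall e1 e2 e3, weq (WM e1 (WM e2 e3)) (WM (WM e1 e2) e3)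
| weq_unitl : forall e, weq (WM (WC (wunit D)) e) e
| weq_unitr : forall e, weq (WM e (WC (wunit D))) e
| weq_const : forall a b, weq (WM (WC a) (WC b)) (WC (wmul D a b)).

(* Propositions.  AllT/ExT bind a term variable; Down/AllW/ExW bind a
   world variable (de Bruijn, so alpha-equivalent propositions are equal). *)
Inductive prop : Type :=
| Atom : Ps -> list tm -> prop
| Tensor : prop -> prop -> prop
| One : prop
| Lolli : prop -> prop -> prop
| With : prop -> prop -> prop
| Top : prop
| Plus : prop -> prop -> prop
| Zero : prop
| Bang : prop -> prop
| AllT : prop -> prop
| ExT : prop -> prop
| At : prop -> wexp -> prop
| Down : prop -> prop
| AllW : prop -> prop
| ExW : prop -> prop.

Fixpoint psubt (s : nat -> tm) (A : prop) : prop :=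
  match A with
  | Atom p ts => Atom p (map (tsubst s) ts)
  | Tensor A B => Tensor (psubt s A) (psubt s B)
  | One => One
  | Lolli A B => Lolli (psubt s A) (psubt s B)
  | With A B => With (psubt s A) (psubt s B)
  | Top => Top
  | Plus A B => Plus (psubt s A) (psubt s B)
  | Zero => Zero
  | Bang A => Bang (psubt s A)
  | AllT A => AllT (psubt (tup s) A)
  | ExT A => ExT (psubt (tup s) A)
  | At A w => At (psubt s A) w
  | Down A => Down (psubt s A)
  | AllW A => AllW (psubt s A)
  | ExW A => ExW (psubt s A)
  end.

Fixpoint psubw (s : nat -> wexp) (A : prop) : prop :=
  match A with
  | Atom p ts => Atom p ts
  | Tensor A B => Tensor (psubw s A) (psubw s B)
  | One => One
  | Lolli A B => Lolli (psubw s A) (psubw s B)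
  | With A B => With (psubw s A) (psubw s B)
  | Top => Top
  | Plus A B => Plus (psubw s A) (psubw s B)
  | Zero => Zero
  | Bang A => Bang (psubw s A)
  | AllT A => AllT (psubw s A)
  | ExT A => ExT (psubw s A)
  | At A w => At (psubw s A) (wsubst s w)
  | Down A => Down (psubw (wup s) A)
  | AllW A => AllW (psubw (wup s) A)
  | ExW A => ExW (psubw (wup s) A)
  end.

Fixpoint peq (A B : prop) : Prop :=
  match A, B with
  | Atom p ts, Atom q ss => p = q /\ ts = ss
  | Tensor A1 A2, Tensor B1 B2 => peq A1 B1 /\ peq A2 B2
  | One, One => True
  | Lolli A1 A2, Lolli B1 B2 => peq A1 B1 /\ peq A2 B2
  | With A1 A2, With B1 B2 => peq A1 B1 /\ peq A2 B2
  | Top, Top => True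
  | Plus A1 A2, Plus B1 B2 => peq A1 B1 /\ peq A2 B2
  | Zero, Zero => True
  | Bang A1, Bang B1 => peq A1 B1
  | AllT A1, AllT B1 => peq A1 B1
  | ExT A1, ExT B1 => peq A1 B1
  | At A1 w1, At B1 v1 => peq A1 B1 /\ weq w1 v1
  | Down A1, Down B1 => peq A1 B1
  | AllW A1, AllW B1 => peq A1 B1
  | ExW A1, ExW B1 => peq A1 B1
  | _, _ => False
  end.

Definition judg : Type := (prop * wexp)%type.
Definition jeq (j k : judg) : Prop := peq (fst j) (fst k) /\ weq (snd j) (snd k).

(* Unrestricted contexts are sets: lists compared as sets (modulo jeq). *)
Definition set_eq (G G' : list judg) : Prop :=
  (forall j, In j G -> exists k, In k G' /\ jeq j k) /\
  (forall k, In k G' -> exists j, In j G /\ jeq j k).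
(* Linear contexts are multisets: lists compared up to permutation (modulo jeq). *)
Definition ms_eq (L L' : list judg) : Prop :=
  exists L'', Permutation L L'' /\ Forall2 jeq L'' L'.

(* Shifting contexts when going under a binder (freshness of the eigenvariable). *)
Definition jshiftt (j : judg) : judg := (psubt (fun n => TVar (S n)) (fst j), snd j).
Definition jshiftw (j : judg) : judg := (psubw (fun n => WV (S n)) (fst j), wshift (snd j)).

Inductive deriv : list judg -> list judg -> prop -> wexp -> Prop :=
| d_conv : forall G L C w G' L' C' w',
    deriv G L C w -> set_eq G G' -> ms_eq L L' -> peq C C' -> weq w w' ->
    deriv G' L' C' w'
| d_init : forall G p ts u, deriv G [(Atom p ts, u)] (Atom p ts) u
| d_copy : forall G L A u C w,
    In (A, u) G -> deriv G ((A, u) :: L) C w -> deriv G L C w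
| d_tensorR : forall G L L' A B w,
    deriv G L A w -> deriv G L' B w -> deriv G (L ++ L') (Tensor A B) w
| d_tensorL : forall G L A B u C w,
    deriv G ((A, u) :: (B, u) :: L) C w -> deriv G ((Tensor A B, u) :: L) C w
| d_oneR : forall G w, deriv G [] One w
| d_oneL : forall G L u C w, deriv G L C w -> deriv G ((One, u) :: L) C w
| d_lolliR : forall G L A B w,
    deriv G ((A, w) :: L) B w -> deriv G L (Lolli A B) w
| d_lolliL : forall G L L' A B u C w,
    deriv G L A u -> deriv G ((B, u) :: L') C w ->
    deriv G ((Lolli A B, u) :: L ++ L') C w
| d_topR : forall G L w, deriv G L Top w
| d_zeroL : forall G L u C w, deriv G ((Zero, u) :: L) C w
| d_withR : forall G L A B w,
    deriv G L A w -> deriv G L B w -> deriv G L (With A B) w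
| d_withL1 : forall G L A B u C w,
    deriv G ((A, u) :: L) C w -> deriv G ((With A B, u) :: L) C w
| d_withL2 : forall G L A B u C w,
    deriv G ((B, u) :: L) C w -> deriv G ((With A B, u) :: L) C w
| d_plusR1 : forall G L A B w, deriv G L A w -> deriv G L (Plus A B) w
| d_plusR2 : forall G L A B w, deriv G L B w -> deriv G L (Plus A B) w
| d_plusL : forall G L A B u C w,
    deriv G ((A, u) :: L) C w -> deriv G ((B, u) :: L) C w ->
    deriv G ((Plus A B, u) :: L) C w
| d_allTR : forall G L A w,
    deriv (map jshiftt G) (map jshiftt L) A w -> deriv G L (AllT A) w
| d_allTL : forall G L A t u C w,
    deriv G ((psubt (tsingle t) A, u) :: L) C w -> deriv G ((AllT A, u) :: L) C w
| d_exTR : forall G L A t w,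
    deriv G L (psubt (tsingle t) A) w -> deriv G L (ExT A) w
| d_exTL : forall G L A u C w,
    deriv (map jshiftt G) ((A, u) :: map jshiftt L)
          (psubt (fun n => TVar (S n)) C) w ->
    deriv G ((ExT A, u) :: L) C w
| d_allWR : forall G L A w,
    deriv (map jshiftw G) (map jshiftw L) A (wshift w) -> deriv G L (AllW A) w
| d_allWL : forall G L A v u C w,
    deriv G ((psubw (wsingle v) A, u) :: L) C w -> deriv G ((AllW A, u) :: L) C w
| d_exWR : forall G L A v w,
    deriv G L (psubw (wsingle v) A) w -> deriv G L (ExW A) w
| d_exWL : forall G L A u C w,
    deriv (map jshiftw G) ((A, wshift u) :: map jshiftw L)
          (psubw (fun n => WV (S n)) C) (wshift w) ->
    deriv G ((ExW A, u) :: L) C w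
| d_bangR : forall G A w, deriv G [] A w -> deriv G [] (Bang A) w
| d_bangL : forall G L A u C w,
    deriv ((A, u) :: G) L C w -> deriv G ((Bang A, u) :: L) C w
| d_atR : forall G L A u v, deriv G L A u -> deriv G L (At A u) v
| d_atL : forall G L A u v C w,
    deriv G ((A, u) :: L) C w -> deriv G ((At A u, v) :: L) C w
| d_downR : forall G L A w,
    deriv G L (psubw (wsingle w) A) w -> deriv G L (Down A) w
| d_downL : forall G L A v C w,
    deriv G ((psubw (wsingle v) A, v) :: L) C w -> deriv G ((Down A, v) :: L) C w.

End HyLL.

From Stdlib Require Import List Permutation Lia FunctionalExtensionality.
Import ListNotations.
Set Implicit Arguments.

(* Gentzen-style cut elimination, by induction on the size of the cut formula.
   For a given size, the linear cut (1) is proved by induction on the sum of the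
   heights of the two derivations.  When the cut formula is principal on both
   sides it is replaced by cuts on immediate subformulas; for the quantifier
   rules the eigenvariable is first instantiated, which is possible since
   derivability is closed under substitution.  Otherwise the cut is permuted
   above the last rule of one premise; this may shift or weaken the other
   derivation (for the eigenvariable rules and for !L), which is why the
   induction is on heights, preserved by these operations, rather than on
   derivations.  The unrestricted cut (2) at a given size then follows by
   induction on the derivation, each copy of A@u becoming a linear cut. *)

Arguments TVar {Fs}. Arguments TApp {Fs}.
Arguments WC {D}. Arguments WV {D}. Arguments WM {D}.
Arguments Atom {D Fs Ps}. Arguments Tensor {D Fs Ps}. Arguments One {D Fs Ps}.
Arguments Lolli {D Fs Ps}. Arguments With {D Fs Ps}. Arguments Top {D Fs Ps}.
Arguments Plus {D Fs Ps}. Arguments Zero {D Fs Ps}. Arguments Bang {D Fs Ps}.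
Arguments AllT {D Fs Ps}. Arguments ExT {D Fs Ps}. Arguments At {D Fs Ps}.
Arguments Down {D Fs Ps}. Arguments AllW {D Fs Ps}. Arguments ExW {D Fs Ps}.
Arguments jshiftt {D Fs Ps} j /. Arguments jshiftw {D Fs Ps} j /.
Arguments jeq {D Fs Ps}.

Section HyLLCut.
Context (D : cdomain) (Fs Ps : Type).
Local Notation tm := (tm Fs).
Local Notation wexp := (wexp D).
Local Notation prop := (prop D Fs Ps).
Local Notation judg := (judg D Fs Ps).
Local Notation tsh := (fun n : nat => @TVar Fs (S n)).
Local Notation wsh := (fun n : nat => @WV D (S n)).

Fixpoint tm_nested_ind (P : tm -> Prop) (HV : forall n, P (TVar n))
  (HA : forall f ts, Forall P ts -> P (TApp f ts)) (t : tm) : P t :=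
  match t with
  | TVar n => HV n
  | TApp f ts => HA f ts ((fix go (l : list tm) : Forall P l :=
      match l with
      | [] => Forall_nil _
      | x :: l => Forall_cons _ (tm_nested_ind HV HA x) (go l)
      end) ts)
  end.

Lemma tsubst_comp (t : tm) (s r : nat -> tm) :
  tsubst s (tsubst r t) = tsubst (fun n => tsubst s (r n)) t.
Proof.
  induction t using tm_nested_ind; simpl; f_equal.
  rewrite map_map; induction H; simpl; f_equal; auto.
Qed.

Lemma tsubst_id (t : tm) : tsubst TVar t = t.
Proof.
  induction t using tm_nested_ind; simpl; f_equal.
  induction H; simpl; f_equal; auto.
Qed.

Lemma tup_comp (s r : nat -> tm) :
  tup (fun n => tsubst s (r n)) = (fun n => tsubst (tup s) (tup r n)).
Proof.
  apply functional_extensionality; intros [|m]; simpl; auto.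
  unfold tshift; rewrite !tsubst_comp; reflexivity.
Qed.

Lemma tup_id : tup TVar = @TVar Fs.
Proof. apply functional_extensionality; intros [|m]; reflexivity. Qed.

Lemma psubt_comp (A : prop) s r :
  psubt s (psubt r A) = psubt (fun n => tsubst s (r n)) A.
Proof.
  revert s r; induction A; intros; simpl; f_equal; auto;
    try (rewrite IHA, tup_comp; reflexivity).
  rewrite map_map; apply map_ext; intros; apply tsubst_comp.
Qed.

Lemma psubt_id (A : prop) : psubt TVar A = A.
Proof.
  induction A; simpl; f_equal; auto; try (rewrite tup_id; auto).
  rewrite <- (map_id l) at 2; apply map_ext, tsubst_id.
Qed.

Lemma wsubst_comp (e : wexp) s r :
  wsubst s (wsubst r e) = wsubst (fun n => wsubst s (r n)) e.
Proof. induction e; simpl; f_equal; auto. Qed.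

Lemma wsubst_id (e : wexp) : wsubst WV e = e.
Proof. induction e; simpl; f_equal; auto. Qed.

Lemma wup_comp (s r : nat -> wexp) :
  wup (fun n => wsubst s (r n)) = (fun n => wsubst (wup s) (wup r n)).
Proof.
  apply functional_extensionality; intros [|m]; simpl; auto.
  unfold wshift; rewrite !wsubst_comp; reflexivity.
Qed.

Lemma wup_id : wup WV = @WV D.
Proof. apply functional_extensionality; intros [|m]; reflexivity. Qed.

Lemma psubw_comp (A : prop) s r :
  psubw s (psubw r A) = psubw (fun n => wsubst s (r n)) A.
Proof.
  revert s r; induction A; intros; simpl; f_equal; auto;
    try (rewrite IHA, wup_comp; reflexivity).
  apply wsubst_comp.
Qed.

Lemma psubw_id (A : prop) : psubw WV A = A.
Proof. induction A; simpl; f_equal; auto; try (rewrite wup_id; auto). apply wsubst_id. Qed.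

Lemma psubt_psubw (A : prop) s r : psubt s (psubw r A) = psubw r (psubt s A).
Proof. revert s r; induction A; intros; simpl; f_equal; auto. Qed.

Lemma psubt_tup_shift (A : prop) s :
  psubt (tup s) (psubt tsh A) = psubt tsh (psubt s A).
Proof. rewrite !psubt_comp; reflexivity. Qed.

Lemma psubt_tsingle (A : prop) s t :
  psubt s (psubt (tsingle t) A) = psubt (tsingle (tsubst s t)) (psubt (tup s) A).
Proof.
  rewrite !psubt_comp; f_equal; apply functional_extensionality; intros [|m]; simpl; auto.
  unfold tshift; rewrite tsubst_comp; simpl; rewrite tsubst_id; auto.
Qed.

Lemma psubt_tsingle_shift (A : prop) t : psubt (tsingle t) (psubt tsh A) = A.
Proof. rewrite psubt_comp; apply psubt_id. Qed.

Lemma wsubst_wup_shift (e : wexp) s : wsubst (wup s) (wshift e) = wshift (wsubst s e).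
Proof. unfold wshift; rewrite !wsubst_comp; reflexivity. Qed.

Lemma psubw_wup_shift (A : prop) s :
  psubw (wup s) (psubw wsh A) = psubw wsh (psubw s A).
Proof. rewrite !psubw_comp; reflexivity. Qed.

Lemma psubw_wsingle (A : prop) s v :
  psubw s (psubw (wsingle v) A) = psubw (wsingle (wsubst s v)) (psubw (wup s) A).
Proof.
  rewrite !psubw_comp; f_equal; apply functional_extensionality; intros [|m]; simpl; auto.
  unfold wshift; rewrite wsubst_comp; simpl; rewrite wsubst_id; auto.
Qed.

Lemma psubw_wsingle_shift (A : prop) v : psubw (wsingle v) (psubw wsh A) = A.
Proof. rewrite psubw_comp; apply psubw_id. Qed.

Lemma wsubst_wsingle_shift (e : wexp) v : wsubst (wsingle v) (wshift e) = e.
Proof. unfold wshift; rewrite wsubst_comp; apply wsubst_id. Qed.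

Lemma weq_wsubst (e1 e2 : wexp) s : weq e1 e2 -> weq (wsubst s e1) (wsubst s e2).
Proof. induction 1; simpl; eauto using weq. Qed.

Lemma weq_wsubst_pointwise (e : wexp) s s' :
  (forall n, weq (s n) (s' n)) -> weq (wsubst s e) (wsubst s' e).
Proof. induction e; simpl; eauto using weq. Qed.

Lemma weq_wup (s s' : nat -> wexp) :
  (forall n, weq (s n) (s' n)) -> forall n, weq (wup s n) (wup s' n).
Proof. intros H [|n]; simpl; [constructor | apply weq_wsubst; auto]. Qed.

Lemma peq_refl (A : prop) : peq A A.
Proof. induction A; simpl; repeat split; auto; constructor. Qed.

Lemma peq_sym (A B : prop) : peq A B -> peq B A.
Proof. revert B; induction A; destruct B; simpl; intuition; subst; auto using weq_sym. Qed.

Lemma peq_trans (A B C : prop) : peq A B -> peq B C -> peq A C.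
Proof.
  revert B C; induction A; destruct B, C; simpl; intuition; subst; eauto using weq_trans.
Qed.

Lemma peq_psubw (A B : prop) s s' :
  peq A B -> (forall n, weq (s n) (s' n)) -> peq (psubw s A) (psubw s' B).
Proof.
  revert B s s'; induction A; destruct B; simpl; intros; intuition; subst; eauto using weq_wup.
  eapply weq_trans; [apply weq_wsubst; eauto | apply weq_wsubst_pointwise; auto].
Qed.

Lemma peq_psubt (A B : prop) s : peq A B -> peq (psubt s A) (psubt s B).
Proof. revert B s; induction A; destruct B; simpl; intros; intuition; subst; eauto. Qed.

Fixpoint size (A : prop) : nat :=
  match A with
  | Atom _ _ | One | Top | Zero => 1
  | Tensor A B | Lolli A B | With A B | Plus A B => S (size A + size B)
  | Bang A | AllT A | ExT A | At A _ | Down A | AllW A | ExW A => S (size A)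
  end.

Lemma size_psubt (A : prop) s : size (psubt s A) = size A.
Proof. revert s; induction A; intros; simpl; auto. Qed.

Lemma size_psubw (A : prop) s : size (psubw s A) = size A.
Proof. revert s; induction A; intros; simpl; auto. Qed.

Lemma size_peq (A B : prop) : peq A B -> size A = size B.
Proof. revert B; induction A; destruct B; simpl; intuition. Qed.

Lemma size_gt0 (A : prop) : 0 < size A.
Proof. destruct A; simpl; lia. Qed.

Lemma jeq_refl (j : judg) : jeq j j.
Proof. split; [apply peq_refl | constructor]. Qed.

Lemma jeq_sym (j k : judg) : jeq j k -> jeq k j.
Proof. intros [H1 H2]; split; [apply peq_sym | apply weq_sym]; auto. Qed.

Lemma jeq_trans (j k l : judg) : jeq j k -> jeq k l -> jeq j l.
Proof. intros [H1 H2] [H3 H4]; split; [eapply peq_trans | eapply weq_trans]; eauto. Qed.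

Lemma jeq_pair (A B : prop) u v : peq A B -> weq u v -> jeq (A, u) (B, v).
Proof. split; auto. Qed.

Definition jsubt (s : nat -> tm) (j : judg) : judg := (psubt s (fst j), snd j).
Definition jsubw (s : nat -> wexp) (j : judg) : judg := (psubw s (fst j), wsubst s (snd j)).
Arguments jsubt s j /.
Arguments jsubw s j /.

Lemma jeq_jsubt s (j k : judg) : jeq j k -> jeq (jsubt s j) (jsubt s k).
Proof. intros [H1 H2]; split; simpl; auto using peq_psubt. Qed.

Lemma jeq_jsubw s (j k : judg) : jeq j k -> jeq (jsubw s j) (jsubw s k).
Proof. intros [H1 H2]; split; simpl; auto using peq_psubw, weq_wsubst, weq_refl. Qed.

Lemma jeq_jshiftt (j k : judg) : jeq j k -> jeq (jshiftt j) (jshiftt k).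
Proof. apply jeq_jsubt. Qed.

Lemma jeq_jshiftw (j k : judg) : jeq j k -> jeq (jshiftw j) (jshiftw k).
Proof. apply jeq_jsubw. Qed.

Lemma map_jsubt_jshiftt s (G : list judg) :
  map (jsubt (tup s)) (map jshiftt G) = map jshiftt (map (jsubt s) G).
Proof. rewrite !map_map; apply map_ext; intros [A w]; simpl; f_equal; apply psubt_tup_shift. Qed.

Lemma map_jsubt_jshiftw s (G : list judg) :
  map (jsubt s) (map jshiftw G) = map jshiftw (map (jsubt s) G).
Proof. rewrite !map_map; apply map_ext; intros [A w]; simpl; f_equal; apply psubt_psubw. Qed.

Lemma map_jsubw_jshiftt s (G : list judg) :
  map (jsubw s) (map jshiftt G) = map jshiftt (map (jsubw s) G).
Proof.
  rewrite !map_map; apply map_ext; intros [A w]; simpl; f_equal; symmetry; apply psubt_psubw.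
Qed.

Lemma map_jsubw_jshiftw s (G : list judg) :
  map (jsubw (wup s)) (map jshiftw G) = map jshiftw (map (jsubw s) G).
Proof.
  rewrite !map_map; apply map_ext; intros [A w]; simpl; f_equal;
    [apply psubw_wup_shift | apply wsubst_wup_shift].
Qed.

Lemma map_jsubt_tsingle_jshiftt t (G : list judg) : map (jsubt (tsingle t)) (map jshiftt G) = G.
Proof.
  rewrite map_map; rewrite <- (map_id G) at 2; apply map_ext; intros [A w]; simpl; f_equal;
    apply psubt_tsingle_shift.
Qed.

Lemma map_jsubw_wsingle_jshiftw v (G : list judg) : map (jsubw (wsingle v)) (map jshiftw G) = G.
Proof.
  rewrite map_map; rewrite <- (map_id G) at 2; apply map_ext; intros [A w]; simpl; f_equal;
    [apply psubw_wsingle_shift | apply wsubst_wsingle_shift].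
Qed.

Definition subctx (G G' : list judg) : Prop :=
  forall j, In j G -> exists k, In k G' /\ jeq j k.

Lemma subctx_refl (G : list judg) : subctx G G.
Proof. intros j H; exists j; split; auto using jeq_refl. Qed.

Lemma subctx_trans (G1 G2 G3 : list judg) : subctx G1 G2 -> subctx G2 G3 -> subctx G1 G3.
Proof.
  intros H1 H2 j Hj; destruct (H1 j Hj) as [k [Hk Hjk]];
  destruct (H2 k Hk) as [l [Hl Hkl]]; exists l; split; eauto using jeq_trans.
Qed.

Lemma set_eq_subctx (G G' : list judg) : set_eq G G' -> subctx G G'.
Proof. intros [H _]; exact H. Qed.

Lemma set_eq_refl (G : list judg) : set_eq G G.
Proof. split; intros j Hj; exists j; split; auto using jeq_refl. Qed.

Lemma subctx_cons (j : judg) G G' : subctx G G' -> subctx (j :: G) (j :: G').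
Proof.
  intros H k [<-|Hk]; [exists j; split; simpl; auto using jeq_refl|].
  destruct (H k Hk) as [l [Hl Hkl]]; exists l; split; simpl; auto.
Qed.

Lemma subctx_cons_r (j : judg) G : subctx G (j :: G).
Proof. intros k Hk; exists k; split; simpl; auto using jeq_refl. Qed.

Lemma subctx_head (a b : judg) G : jeq a b -> subctx (a :: G) (b :: G).
Proof.
  intros H j [<-|Hj]; [exists b | exists j]; split; simpl; auto using jeq_refl.
Qed.

Lemma subctx_swap (a b : judg) G2 G1 : subctx G2 (a :: G1) -> subctx (b :: G2) (a :: b :: G1).
Proof.
  intros H j [<-|Hj]; [exists b; split; simpl; auto using jeq_refl|].
  destruct (H j Hj) as [k [Hk Hjk]]; exists k; split; simpl in *; intuition.
Qed.

Section MapCompat.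
Variable f : judg -> judg.
Hypothesis f_jeq : forall j k, jeq j k -> jeq (f j) (f k).

Lemma subctx_map (G G' : list judg) : subctx G G' -> subctx (map f G) (map f G').
Proof.
  intros H j Hj; apply in_map_iff in Hj; destruct Hj as [j0 [<- Hj0]].
  destruct (H j0 Hj0) as [k [Hk Hjk]]; exists (f k); split; auto using in_map.
Qed.

Lemma set_eq_map (G G' : list judg) : set_eq G G' -> set_eq (map f G) (map f G').
Proof.
  intros [H1 H2]; split; [apply subctx_map; auto|].
  intros k Hk; apply in_map_iff in Hk; destruct Hk as [k0 [<- Hk0]].
  destruct (H2 k0 Hk0) as [j [Hj Hjk]]; exists (f j); split; auto using in_map.
Qed.

Lemma ms_eq_map (L L' : list judg) : ms_eq L L' -> ms_eq (map f L) (map f L').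
Proof.
  intros [M [HP HF]]; exists (map f M); split; [apply Permutation_map; auto|].
  clear HP; induction HF; simpl; constructor; auto.
Qed.

End MapCompat.

Lemma subctx_jshiftt (G G' : list judg) : subctx G G' -> subctx (map jshiftt G) (map jshiftt G').
Proof. apply subctx_map, jeq_jshiftt. Qed.

Lemma subctx_jshiftw (G G' : list judg) : subctx G G' -> subctx (map jshiftw G) (map jshiftw G').
Proof. apply subctx_map, jeq_jshiftw. Qed.

Lemma ms_eq_jshiftt (L L' : list judg) : ms_eq L L' -> ms_eq (map jshiftt L) (map jshiftt L').
Proof. apply ms_eq_map, jeq_jshiftt. Qed.

Lemma ms_eq_jshiftw (L L' : list judg) : ms_eq L L' -> ms_eq (map jshiftw L) (map jshiftw L').
Proof. apply ms_eq_map, jeq_jshiftw. Qed.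

Lemma Forall2_jeq_refl (L : list judg) : Forall2 jeq L L.
Proof. induction L; constructor; auto using jeq_refl. Qed.

Lemma Forall2_jeq_sym (L L' : list judg) : Forall2 jeq L L' -> Forall2 jeq L' L.
Proof. induction 1; constructor; auto using jeq_sym. Qed.

Lemma Forall2_jeq_trans (L1 L2 L3 : list judg) :
  Forall2 jeq L1 L2 -> Forall2 jeq L2 L3 -> Forall2 jeq L1 L3.
Proof.
  intros H; revert L3; induction H; intros L3 H3; inversion H3; subst;
  constructor; eauto using jeq_trans.
Qed.

Lemma ms_eq_perm (L L' : list judg) : Permutation L L' -> ms_eq L L'.
Proof. intros; exists L'; split; auto using Forall2_jeq_refl. Qed.

Lemma ms_eq_refl (L : list judg) : ms_eq L L.
Proof. apply ms_eq_perm; reflexivity. Qed.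

Lemma ms_eq_sym (L L' : list judg) : ms_eq L L' -> ms_eq L' L.
Proof.
  intros [M [HP HF]].
  destruct (Permutation_Forall2 (Permutation_sym HP) HF) as [L2 [HP2 HF2]].
  exists L2; split; auto using Forall2_jeq_sym.
Qed.

Lemma ms_eq_trans (L1 L2 L3 : list judg) : ms_eq L1 L2 -> ms_eq L2 L3 -> ms_eq L1 L3.
Proof.
  intros [M1 [HP1 HF1]] [M2 [HP2 HF2]].
  apply Forall2_jeq_sym in HF1.
  destruct (Permutation_Forall2 HP2 HF1) as [M1' [HP HF]].
  exists M1'; split; [eapply Permutation_trans; eauto|].
  eapply Forall2_jeq_trans; eauto using Forall2_jeq_sym.
Qed.

Lemma ms_eq_cons (a b : judg) l l' : jeq a b -> ms_eq l l' -> ms_eq (a :: l) (b :: l').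
Proof. intros H [M [HP HF]]; exists (a :: M); split; auto. Qed.

Lemma ms_eq_head (a b : judg) l : jeq a b -> ms_eq (a :: l) (b :: l).
Proof. intros; apply ms_eq_cons; auto using ms_eq_refl. Qed.

Lemma ms_eq_app (a a' b b' : list judg) : ms_eq a a' -> ms_eq b b' -> ms_eq (a ++ b) (a' ++ b').
Proof.
  intros [M [HP HF]] [N [HP' HF']]; exists (M ++ N); split;
  auto using Permutation_app, Forall2_app.
Qed.

Lemma ms_eq_app_l (a b b' : list judg) : ms_eq b b' -> ms_eq (a ++ b) (a ++ b').
Proof. apply ms_eq_app, ms_eq_refl. Qed.

Lemma ms_eq_nil_cons (x : judg) l : ~ ms_eq [] (x :: l).
Proof. intros [M [HP HF]]; apply Permutation_nil in HP; subst; inversion HF. Qed.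

Lemma ms_eq_middle (a : judg) L1 l : ms_eq (L1 ++ a :: l) (a :: L1 ++ l).
Proof. apply ms_eq_perm, Permutation_sym, Permutation_middle. Qed.

Lemma ms_eq_cons_inv_jeq (L : list judg) b l' : ms_eq L (b :: l') ->
  exists c M, Permutation L (c :: M) /\ jeq c b /\ ms_eq M l'.
Proof.
  intros [N [HP HF]]; inversion HF; subst.
  exists x, l; split; auto; split; auto; exists l; split; auto.
Qed.

Lemma ms_eq_cons_inv (a b : judg) l l' : ms_eq (a :: l) (b :: l') ->
  (jeq a b /\ ms_eq l l') \/ (exists l3, ms_eq l (b :: l3) /\ ms_eq (a :: l3) l').
Proof.
  intros H; destruct (ms_eq_cons_inv_jeq H) as [c [M [HP [Hcb HM]]]].
  assert (Hin : In c (a :: l)) by (apply (Permutation_in c (Permutation_sym HP)); simpl; auto).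
  destruct Hin as [<-|Hin].
  - left; split; auto.
    eapply ms_eq_trans; [apply ms_eq_perm; eapply Permutation_cons_inv; eauto | auto].
  - right; apply in_split in Hin; destruct Hin as [x [y ->]]; exists (x ++ y); split.
    + eapply ms_eq_trans; [apply ms_eq_perm, Permutation_sym, Permutation_middle|].
      apply ms_eq_head; auto.
    + eapply ms_eq_trans; [|exact HM]; apply ms_eq_perm.
      apply Permutation_cons_inv with c; rewrite <- HP; simpl.
      exact (Permutation_middle (a :: x) y c).
Qed.

Lemma ms_eq_app_cons_inv (La Lb : list judg) b l' : ms_eq (La ++ Lb) (b :: l') ->
  (exists La', ms_eq La (b :: La') /\ ms_eq (La' ++ Lb) l') \/
  (exists Lb', ms_eq Lb (b :: Lb') /\ ms_eq (La ++ Lb') l').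
Proof.
  intros H; destruct (ms_eq_cons_inv_jeq H) as [c [M [HP [Hcb HM]]]].
  assert (Hin : In c (La ++ Lb)) by (apply (Permutation_in c (Permutation_sym HP)); simpl; auto).
  apply in_app_or in Hin; destruct Hin as [Hin|Hin];
    apply in_split in Hin; destruct Hin as [x [y ->]]; [left | right]; exists (x ++ y); split.
  - eapply ms_eq_trans; [apply ms_eq_middle | apply ms_eq_head; auto].
  - eapply ms_eq_trans; [|exact HM]; apply ms_eq_perm.
    apply Permutation_cons_inv with c; rewrite <- HP, <- !app_assoc; simpl.
    apply Permutation_middle.
  - eapply ms_eq_trans; [apply ms_eq_middle | apply ms_eq_head; auto].
  - eapply ms_eq_trans; [|exact HM]; apply ms_eq_perm.
    apply Permutation_cons_inv with c; rewrite <- HP, !app_assoc.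
    apply Permutation_middle.
Qed.

(** * Derivations with heights *)

Lemma deriv_ms_eq (G L L' : list judg) C w :
  deriv G L C w -> ms_eq L L' -> deriv G L' C w.
Proof. intros; eapply d_conv; eauto using set_eq_refl, peq_refl, weq_refl. Qed.

Lemma deriv_copy_jeq (G L : list judg) k j C w :
  In k G -> jeq k j -> deriv G (j :: L) C w -> deriv G L C w.
Proof.
  destruct k as [A u]; intros Hin Hj H; eapply d_copy; [exact Hin|].
  eapply deriv_ms_eq; [exact H | apply ms_eq_head, jeq_sym; auto].
Qed.

(** [derivh n] is [deriv] with height at most [n]; the copy rule is stated up
    to [jeq] so that weakening into a [subctx] preserves heights. *)
Inductive derivh : nat -> list judg -> list judg -> prop -> wexp -> Prop :=
| h_init : forall n G p ts u, derivh (S n) G [(Atom p ts, u)] (Atom p ts) u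
| h_copy : forall n G L k A u C w,
    In k G -> jeq k (A, u) -> derivh n G ((A, u) :: L) C w -> derivh (S n) G L C w
| h_tensorR : forall n G L L' A B w,
    derivh n G L A w -> derivh n G L' B w -> derivh (S n) G (L ++ L') (Tensor A B) w
| h_tensorL : forall n G L A B u C w,
    derivh n G ((A, u) :: (B, u) :: L) C w -> derivh (S n) G ((Tensor A B, u) :: L) C w
| h_oneR : forall n G w, derivh (S n) G [] One w
| h_oneL : forall n G L u C w, derivh n G L C w -> derivh (S n) G ((One, u) :: L) C w
| h_lolliR : forall n G L A B w,
    derivh n G ((A, w) :: L) B w -> derivh (S n) G L (Lolli A B) w
| h_lolliL : forall n G L L' A B u C w,
    derivh n G L A u -> derivh n G ((B, u) :: L') C w ->
    derivh (S n) G ((Lolli A B, u) :: L ++ L') C w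
| h_topR : forall n G L w, derivh (S n) G L Top w
| h_zeroL : forall n G L u C w, derivh (S n) G ((Zero, u) :: L) C w
| h_withR : forall n G L A B w,
    derivh n G L A w -> derivh n G L B w -> derivh (S n) G L (With A B) w
| h_withL1 : forall n G L A B u C w,
    derivh n G ((A, u) :: L) C w -> derivh (S n) G ((With A B, u) :: L) C w
| h_withL2 : forall n G L A B u C w,
    derivh n G ((B, u) :: L) C w -> derivh (S n) G ((With A B, u) :: L) C w
| h_plusR1 : forall n G L A B w, derivh n G L A w -> derivh (S n) G L (Plus A B) w
| h_plusR2 : forall n G L A B w, derivh n G L B w -> derivh (S n) G L (Plus A B) w
| h_plusL : forall n G L A B u C w,
    derivh n G ((A, u) :: L) C w -> derivh n G ((B, u) :: L) C w ->
    derivh (S n) G ((Plus A B, u) :: L) C w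
| h_allTR : forall n G L A w,
    derivh n (map jshiftt G) (map jshiftt L) A w -> derivh (S n) G L (AllT A) w
| h_allTL : forall n G L A t u C w,
    derivh n G ((psubt (tsingle t) A, u) :: L) C w -> derivh (S n) G ((AllT A, u) :: L) C w
| h_exTR : forall n G L A t w,
    derivh n G L (psubt (tsingle t) A) w -> derivh (S n) G L (ExT A) w
| h_exTL : forall n G L A u C w,
    derivh n (map jshiftt G) ((A, u) :: map jshiftt L) (psubt tsh C) w ->
    derivh (S n) G ((ExT A, u) :: L) C w
| h_allWR : forall n G L A w,
    derivh n (map jshiftw G) (map jshiftw L) A (wshift w) -> derivh (S n) G L (AllW A) w
| h_allWL : forall n G L A v u C w,
    derivh n G ((psubw (wsingle v) A, u) :: L) C w -> derivh (S n) G ((AllW A, u) :: L) C w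
| h_exWR : forall n G L A v w,
    derivh n G L (psubw (wsingle v) A) w -> derivh (S n) G L (ExW A) w
| h_exWL : forall n G L A u C w,
    derivh n (map jshiftw G) ((A, wshift u) :: map jshiftw L) (psubw wsh C) (wshift w) ->
    derivh (S n) G ((ExW A, u) :: L) C w
| h_bangR : forall n G A w, derivh n G [] A w -> derivh (S n) G [] (Bang A) w
| h_bangL : forall n G L A u C w,
    derivh n ((A, u) :: G) L C w -> derivh (S n) G ((Bang A, u) :: L) C w
| h_atR : forall n G L A u v, derivh n G L A u -> derivh (S n) G L (At A u) v
| h_atL : forall n G L A u v C w,
    derivh n G ((A, u) :: L) C w -> derivh (S n) G ((At A u, v) :: L) C w
| h_downR : forall n G L A w,
    derivh n G L (psubw (wsingle w) A) w -> derivh (S n) G L (Down A) w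
| h_downL : forall n G L A v C w,
    derivh n G ((psubw (wsingle v) A, v) :: L) C w -> derivh (S n) G ((Down A, v) :: L) C w
| h_conv : forall n G L C w G' L' C' w',
    derivh n G L C w -> set_eq G G' -> ms_eq L L' -> peq C C' -> weq w w' ->
    derivh (S n) G' L' C' w'.

Lemma derivh_deriv n (G L : list judg) C w : derivh n G L C w -> deriv G L C w.
Proof. induction 1; try (econstructor; eauto; fail). eapply deriv_copy_jeq; eauto. Qed.

Lemma derivh_mono n m (G L : list judg) C w : derivh n G L C w -> n <= m -> derivh m G L C w.
Proof.
  intros H; revert m; induction H; (intros [|m] Hm; [lia | solve [econstructor; eauto with arith]]).
Qed.

Lemma deriv_derivh (G L : list judg) C w : deriv G L C w -> exists n, derivh n G L C w.
Proof.
  induction 1; repeat match goal with H : exists n, _ |- _ => destruct H as [?n ?H] end;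
  first
    [ exists 1; solve [econstructor]
    | match goal with H1 : derivh ?n _ _ _ _, H2 : derivh ?m _ _ _ _ |- _ =>
        exists (S (max n m)); solve [econstructor; eapply derivh_mono; eauto; lia] end
    | match goal with H : derivh ?n _ _ _ _ |- _ =>
        exists (S n); solve [econstructor; eauto using jeq_refl] end ].
Qed.

Lemma derivh_weaken n (G L : list judg) C w :
  derivh n G L C w -> forall G', subctx G G' -> derivh n G' L C w.
Proof.
  induction 1; intros G2 HG;
    try solve [econstructor; eauto using subctx_cons, subctx_map, jeq_jshiftt, jeq_jshiftw].
  - destruct (HG k H) as [k' [Hk' Hkk']].
    eapply h_copy with (A := A) (u := u); eauto using jeq_trans, jeq_sym.
  - eapply h_conv; [apply IHderivh | apply set_eq_refl | eauto ..].
    eapply subctx_trans; eauto using set_eq_subctx.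
Qed.

Lemma derivh_subst_tm n (G L : list judg) C w : derivh n G L C w ->
  forall s, derivh n (map (jsubt s) G) (map (jsubt s) L) (psubt s C) w.
Proof.
  induction 1; intros s; simpl in *; rewrite ?map_app;
    try solve [econstructor; eauto using in_map, jeq_jsubt].
  - apply h_allTR; rewrite <- !map_jsubt_jshiftt; auto.
  - specialize (IHderivh s); simpl in IHderivh; rewrite psubt_tsingle in IHderivh;
      eauto using derivh.
  - specialize (IHderivh s); rewrite psubt_tsingle in IHderivh; eauto using derivh.
  - specialize (IHderivh (tup s)); simpl in IHderivh.
    rewrite !map_jsubt_jshiftt, psubt_tup_shift in IHderivh; eauto using derivh.
  - apply h_allWR; rewrite <- !map_jsubt_jshiftw; auto.
  - specialize (IHderivh s); simpl in IHderivh; rewrite psubt_psubw in IHderivh; eauto using derivh.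
  - specialize (IHderivh s); rewrite psubt_psubw in IHderivh; eauto using derivh.
  - specialize (IHderivh s); simpl in IHderivh.
    rewrite !map_jsubt_jshiftw, psubt_psubw in IHderivh; eauto using derivh.
  - specialize (IHderivh s); rewrite psubt_psubw in IHderivh; eauto using derivh.
  - specialize (IHderivh s); simpl in IHderivh; rewrite psubt_psubw in IHderivh; eauto using derivh.
  - eapply h_conv;
      [apply IHderivh | apply set_eq_map | apply ms_eq_map | apply peq_psubt | ];
      eauto using jeq_jsubt.
Qed.

Lemma derivh_subst_world n (G L : list judg) C w : derivh n G L C w ->
  forall s, derivh n (map (jsubw s) G) (map (jsubw s) L) (psubw s C) (wsubst s w).
Proof.
  induction 1; intros s; simpl in *; rewrite ?map_app;
    try solve [econstructor; eauto using in_map, jeq_jsubw].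
  - apply h_allTR; rewrite <- !map_jsubw_jshiftt; auto.
  - specialize (IHderivh s); simpl in IHderivh; rewrite <- psubt_psubw in IHderivh;
      eauto using derivh.
  - specialize (IHderivh s); rewrite <- psubt_psubw in IHderivh; eauto using derivh.
  - specialize (IHderivh s); simpl in IHderivh.
    rewrite !map_jsubw_jshiftt, <- psubt_psubw in IHderivh; eauto using derivh.
  - specialize (IHderivh (wup s)).
    rewrite !map_jsubw_jshiftw, wsubst_wup_shift in IHderivh; eauto using derivh.
  - specialize (IHderivh s); simpl in IHderivh; rewrite psubw_wsingle in IHderivh;
      eauto using derivh.
  - specialize (IHderivh s); rewrite psubw_wsingle in IHderivh; eauto using derivh.
  - specialize (IHderivh (wup s)); simpl in IHderivh.
    rewrite !map_jsubw_jshiftw, !wsubst_wup_shift, psubw_wup_shift in IHderivh;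
      eauto using derivh.
  - specialize (IHderivh s); rewrite psubw_wsingle in IHderivh; eauto using derivh.
  - specialize (IHderivh s); simpl in IHderivh; rewrite psubw_wsingle in IHderivh;
      eauto using derivh.
  - eapply h_conv;
      [apply IHderivh | apply set_eq_map | apply ms_eq_map | apply peq_psubw | apply weq_wsubst];
      eauto using jeq_jsubw, weq_refl.
Qed.

Lemma derivh_shiftt n (G L : list judg) C w :
  derivh n G L C w -> derivh n (map jshiftt G) (map jshiftt L) (psubt tsh C) w.
Proof. intros H; exact (derivh_subst_tm H tsh). Qed.

Lemma derivh_shiftw n (G L : list judg) C w :
  derivh n G L C w -> derivh n (map jshiftw G) (map jshiftw L) (psubw wsh C) (wshift w).
Proof. intros H; exact (derivh_subst_world H wsh). Qed.

Lemma deriv_weaken (G G' L : list judg) C w :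
  deriv G L C w -> subctx G G' -> deriv G' L C w.
Proof.
  intros H HG; destruct (deriv_derivh H) as [n Hn]; eauto using derivh_deriv, derivh_weaken.
Qed.

Lemma deriv_subst_tm (G L : list judg) C w s :
  deriv G L C w -> deriv (map (jsubt s) G) (map (jsubt s) L) (psubt s C) w.
Proof.
  intros H; destruct (deriv_derivh H) as [n Hn]; eauto using derivh_deriv, derivh_subst_tm.
Qed.

Lemma deriv_subst_world (G L : list judg) C w s :
  deriv G L C w -> deriv (map (jsubw s) G) (map (jsubw s) L) (psubw s C) (wsubst s w).
Proof.
  intros H; destruct (deriv_derivh H) as [n Hn]; eauto using derivh_deriv, derivh_subst_world.
Qed.

(** * Principal cuts *)

Definition linear_cut_upto (k : nat) : Prop :=
  forall A : prop, size A <= k -> forall G L1 u L2 L' C w,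
    deriv G L1 A u -> deriv G L2 C w -> ms_eq L2 ((A, u) :: L') -> deriv G (L1 ++ L') C w.

Definition unrestricted_cut_upto (k : nat) : Prop :=
  forall A : prop, size A <= k -> forall G2 L C w G1 u,
    deriv G2 L C w -> subctx G2 ((A, u) :: G1) -> deriv G1 [] A u -> deriv G1 L C w.

Inductive right_rule : list judg -> list judg -> prop -> wexp -> Prop :=
| R_init : forall G p ts u, right_rule G [(Atom p ts, u)] (Atom p ts) u
| R_tensor : forall G L L' A B w,
    deriv G L A w -> deriv G L' B w -> right_rule G (L ++ L') (Tensor A B) w
| R_one : forall G w, right_rule G [] One w
| R_lolli : forall G L A B w, deriv G ((A, w) :: L) B w -> right_rule G L (Lolli A B) w
| R_top : forall G L w, right_rule G L Top w
| R_with : forall G L A B w,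
    deriv G L A w -> deriv G L B w -> right_rule G L (With A B) w
| R_plus1 : forall G L A B w, deriv G L A w -> right_rule G L (Plus A B) w
| R_plus2 : forall G L A B w, deriv G L B w -> right_rule G L (Plus A B) w
| R_allT : forall G L A w,
    deriv (map jshiftt G) (map jshiftt L) A w -> right_rule G L (AllT A) w
| R_exT : forall G L A t w, deriv G L (psubt (tsingle t) A) w -> right_rule G L (ExT A) w
| R_allW : forall G L A w,
    deriv (map jshiftw G) (map jshiftw L) A (wshift w) -> right_rule G L (AllW A) w
| R_exW : forall G L A v w, deriv G L (psubw (wsingle v) A) w -> right_rule G L (ExW A) w
| R_bang : forall G A w, deriv G [] A w -> right_rule G [] (Bang A) w
| R_at : forall G L A u v, deriv G L A u -> right_rule G L (At A u) v
| R_down : forall G L A w, deriv G L (psubw (wsingle w) A) w -> right_rule G L (Down A) w.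

Inductive left_rule : list judg -> judg -> list judg -> prop -> wexp -> Prop :=
| L_init : forall G p ts u, left_rule G (Atom p ts, u) [] (Atom p ts) u
| L_tensor : forall G L A B u C w,
    deriv G ((A, u) :: (B, u) :: L) C w -> left_rule G (Tensor A B, u) L C w
| L_one : forall G L u C w, deriv G L C w -> left_rule G (One, u) L C w
| L_lolli : forall G L L' A B u C w,
    deriv G L A u -> deriv G ((B, u) :: L') C w -> left_rule G (Lolli A B, u) (L ++ L') C w
| L_zero : forall G L u C w, left_rule G (Zero, u) L C w
| L_with1 : forall G L A B u C w,
    deriv G ((A, u) :: L) C w -> left_rule G (With A B, u) L C w
| L_with2 : forall G L A B u C w,
    deriv G ((B, u) :: L) C w -> left_rule G (With A B, u) L C w
| L_plus : forall G L A B u C w,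
    deriv G ((A, u) :: L) C w -> deriv G ((B, u) :: L) C w -> left_rule G (Plus A B, u) L C w
| L_allT : forall G L A t u C w,
    deriv G ((psubt (tsingle t) A, u) :: L) C w -> left_rule G (AllT A, u) L C w
| L_exT : forall G L A u C w,
    deriv (map jshiftt G) ((A, u) :: map jshiftt L) (psubt tsh C) w ->
    left_rule G (ExT A, u) L C w
| L_allW : forall G L A v u C w,
    deriv G ((psubw (wsingle v) A, u) :: L) C w -> left_rule G (AllW A, u) L C w
| L_exW : forall G L A u C w,
    deriv (map jshiftw G) ((A, wshift u) :: map jshiftw L) (psubw wsh C) (wshift w) ->
    left_rule G (ExW A, u) L C w
| L_bang : forall G L A u C w, deriv ((A, u) :: G) L C w -> left_rule G (Bang A, u) L C w
| L_at : forall G L A u v C w, deriv G ((A, u) :: L) C w -> left_rule G (At A u, v) L C w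
| L_down : forall G L A v C w,
    deriv G ((psubw (wsingle v) A, v) :: L) C w -> left_rule G (Down A, v) L C w.

Section PrincipalCuts.
Variable k : nat.
Hypothesis cut_lin : linear_cut_upto k.
Hypothesis cut_unr : unrestricted_cut_upto k.

Lemma principal_init (G : list judg) p ts u p' ts' u' :
  p' = p -> ts' = ts -> weq u' u -> deriv G ([(Atom p ts, u)] ++ []) (Atom p' ts') u'.
Proof.
  intros -> -> Hw.
  eapply d_conv; eauto using d_init, set_eq_refl, ms_eq_refl, peq_refl, weq_sym.
Qed.

Lemma principal_subformula (G : list judg) L1 (A A' : prop) u u' L C w :
  deriv G L1 A u -> size A <= k -> deriv G ((A', u') :: L) C w -> peq A' A -> weq u' u ->
  deriv G (L1 ++ L) C w.
Proof. intros; eapply cut_lin; eauto using ms_eq_head, jeq_pair. Qed.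

Lemma principal_tensor (G : list judg) La Lb (A B : prop) u A' B' u' L C w :
  deriv G La A u -> deriv G Lb B u -> S (size A + size B) <= S k ->
  deriv G ((A', u') :: (B', u') :: L) C w -> peq A' A -> peq B' B -> weq u' u ->
  deriv G ((La ++ Lb) ++ L) C w.
Proof.
  intros Ha Hb Hs H HA HB Hu; rewrite <- app_assoc.
  assert (Hb' : deriv G (Lb ++ (A', u') :: L) C w).
  { eapply cut_lin with (A := B); [lia | exact Hb | exact H |].
    eapply ms_eq_trans; [apply ms_eq_perm, perm_swap | apply ms_eq_head, jeq_pair; auto]. }
  eapply cut_lin with (A := A); [lia | exact Ha | exact Hb' |].
  eapply ms_eq_trans; [apply ms_eq_middle | apply ms_eq_head, jeq_pair; auto].
Qed.

Lemma principal_lolli (G : list judg) L1 (A B : prop) u A' B' u' La Lb C w :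
  deriv G ((A, u) :: L1) B u -> S (size A + size B) <= S k ->
  deriv G La A' u' -> deriv G ((B', u') :: Lb) C w -> peq A' A -> peq B' B -> weq u' u ->
  deriv G (L1 ++ La ++ Lb) C w.
Proof.
  intros H Hs Ha Hb HA HB Hu.
  assert (HB' : deriv G (La ++ L1) B u).
  { eapply principal_subformula; [exact Ha | | exact H | apply peq_sym | apply weq_sym]; auto.
    rewrite (size_peq _ _ HA); lia. }
  eapply deriv_ms_eq; [eapply principal_subformula; eauto; lia |].
  apply ms_eq_perm; rewrite <- app_assoc; apply Permutation_app_swap_app.
Qed.

Lemma principal_allT (G : list judg) L1 (A : prop) u A' u' t L C w :
  deriv (map jshiftt G) (map jshiftt L1) A u -> S (size A) <= S k ->
  deriv G ((psubt (tsingle t) A', u') :: L) C w -> peq A' A -> weq u' u ->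
  deriv G (L1 ++ L) C w.
Proof.
  intros H Hs H' HA Hu; apply (deriv_subst_tm (tsingle t)) in H.
  rewrite !map_jsubt_tsingle_jshiftt in H.
  eapply principal_subformula; eauto using peq_psubt; rewrite size_psubt; lia.
Qed.

Lemma principal_exT (G : list judg) L1 (A : prop) u A' u' t L C w :
  deriv G L1 (psubt (tsingle t) A) u -> S (size A) <= S k ->
  deriv (map jshiftt G) ((A', u') :: map jshiftt L) (psubt tsh C) w -> peq A' A -> weq u' u ->
  deriv G (L1 ++ L) C w.
Proof.
  intros H Hs H' HA Hu; apply (deriv_subst_tm (tsingle t)) in H'; simpl in H'.
  rewrite !map_jsubt_tsingle_jshiftt, psubt_tsingle_shift in H'.
  eapply principal_subformula; eauto using peq_psubt; rewrite size_psubt; lia.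
Qed.

Lemma principal_allW (G : list judg) L1 (A : prop) u A' u' v L C w :
  deriv (map jshiftw G) (map jshiftw L1) A (wshift u) -> S (size A) <= S k ->
  deriv G ((psubw (wsingle v) A', u') :: L) C w -> peq A' A -> weq u' u ->
  deriv G (L1 ++ L) C w.
Proof.
  intros H Hs H' HA Hu; apply (deriv_subst_world (wsingle v)) in H.
  rewrite !map_jsubw_wsingle_jshiftw, wsubst_wsingle_shift in H.
  eapply principal_subformula; eauto using peq_psubw, weq_refl; rewrite size_psubw; lia.
Qed.

Lemma principal_exW (G : list judg) L1 (A : prop) u A' u' v L C w :
  deriv G L1 (psubw (wsingle v) A) u -> S (size A) <= S k ->
  deriv (map jshiftw G) ((A', wshift u') :: map jshiftw L) (psubw wsh C) (wshift w) ->
  peq A' A -> weq u' u -> deriv G (L1 ++ L) C w.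
Proof.
  intros H Hs H' HA Hu; apply (deriv_subst_world (wsingle v)) in H'; simpl in H'.
  rewrite !map_jsubw_wsingle_jshiftw, psubw_wsingle_shift, !wsubst_wsingle_shift in H'.
  eapply principal_subformula; eauto using peq_psubw, weq_refl; rewrite size_psubw; lia.
Qed.

Lemma principal_bang (G : list judg) (A : prop) u A' u' L C w :
  deriv G [] A u -> S (size A) <= S k ->
  deriv ((A', u') :: G) L C w -> peq A' A -> weq u' u -> deriv G ([] ++ L) C w.
Proof.
  intros H Hs H' HA Hu; eapply cut_unr; eauto using subctx_head, jeq_pair; lia.
Qed.

Lemma principal_down (G : list judg) L1 (A : prop) u A' u' L C w :
  deriv G L1 (psubw (wsingle u) A) u -> S (size A) <= S k ->
  deriv G ((psubw (wsingle u') A', u') :: L) C w -> peq A' A -> weq u' u ->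
  deriv G (L1 ++ L) C w.
Proof.
  intros H Hs H' HA Hu; eapply principal_subformula; eauto; [rewrite size_psubw; lia |].
  apply peq_psubw; auto; intros [|m]; simpl; auto using weq_refl.
Qed.

Lemma cut_principal (G : list judg) L1 (A : prop) u j L2 C w :
  right_rule G L1 A u -> size A <= S k -> left_rule G j L2 C w -> jeq j (A, u) ->
  deriv G (L1 ++ L2) C w.
Proof.
  intros HR Hs HL [HA Hu]; destruct HL; destruct HR; simpl in HA, Hu, Hs; try contradiction;
    repeat match goal with H : _ /\ _ |- _ => destruct H end;
    first
      [ assumption
      | solve [eapply principal_init; eauto]
      | solve [eapply principal_tensor; eauto]
      | solve [eapply principal_lolli; eauto]
      | solve [eapply principal_allT; eauto]
      | solve [eapply principal_exT; eauto]
      | solve [eapply principal_allW; eauto]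
      | solve [eapply principal_exW; eauto]
      | solve [eapply principal_bang; eauto]
      | solve [eapply principal_down; eauto]
      | solve [match goal with Ha : deriv _ _ _ _, Hb : deriv _ _ _ _ |- _ =>
          eapply principal_subformula; [exact Ha | | exact Hb | eassumption ..]; lia end] ].
Qed.

End PrincipalCuts.

(** * Commutative cuts *)

Definition cut_height (k N : nat) : Prop :=
  forall n1 (G L1 : list judg) A u, derivh n1 G L1 A u ->
  forall n2 L2 C w, derivh n2 G L2 C w -> n1 + n2 <= N -> size A <= S k ->
  forall L', ms_eq L2 ((A, u) :: L') -> deriv G (L1 ++ L') C w.

Lemma ms_eq_cut_context (a : judg) (L1 l3 L' : list judg) :
  ms_eq (a :: l3) L' -> ms_eq (a :: L1 ++ l3) (L1 ++ L').
Proof. intros H; eapply ms_eq_trans; [apply ms_eq_sym, ms_eq_middle | apply ms_eq_app_l, H]. Qed.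

Lemma cut_left_rule (G L1 l L' : list judg) j X x C w :
  ms_eq (j :: l) ((X, x) :: L') ->
  (forall j' L2 C w, left_rule G j' L2 C w -> jeq j' (X, x) -> deriv G (L1 ++ L2) C w) ->
  left_rule G j l C w ->
  (forall l3, ms_eq l ((X, x) :: l3) -> deriv G (j :: L1 ++ l3) C w) ->
  deriv G (L1 ++ L') C w.
Proof.
  intros Hms Hprincipal Hj Hcommute.
  destruct (ms_eq_cons_inv Hms) as [[Hjx Hr] | [l3 [Hl Hr]]].
  - eapply deriv_ms_eq; [eapply Hprincipal; eauto | apply ms_eq_app_l, Hr].
  - eapply deriv_ms_eq; [apply Hcommute, Hl | apply ms_eq_cut_context, Hr].
Qed.
Arguments cut_left_rule {G L1 l L' j X x C w}.

Lemma commute_left_local (Δ G L1 l l3 : list judg) j X x C w :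
  (forall L, deriv G (Δ ++ L) C w -> deriv G (j :: L) C w) ->
  (forall L', ms_eq (Δ ++ l) ((X, x) :: L') -> deriv G (L1 ++ L') C w) ->
  ms_eq l ((X, x) :: l3) -> deriv G (j :: L1 ++ l3) C w.
Proof.
  intros Hrule Hcut Hl; apply Hrule.
  eapply deriv_ms_eq; [apply Hcut | apply ms_eq_perm, Permutation_app_swap_app].
  eapply ms_eq_trans; [apply ms_eq_app_l, Hl | apply ms_eq_middle].
Qed.

Lemma commute_cons (G L1 L l3 : list judg) a X x C w :
  (forall L', ms_eq (a :: L) ((X, x) :: L') -> deriv G (L1 ++ L') C w) ->
  ms_eq L ((X, x) :: l3) -> deriv G (a :: L1 ++ l3) C w.
Proof. apply (commute_left_local [a]); auto. Qed.
Arguments commute_cons {G L1 L l3 a X x C w}.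

Lemma cut_left_local (Δ G L1 l L' : list judg) j X x C w :
  ms_eq (j :: l) ((X, x) :: L') ->
  (forall j' L2 C w, left_rule G j' L2 C w -> jeq j' (X, x) -> deriv G (L1 ++ L2) C w) ->
  left_rule G j l C w ->
  (forall L, deriv G (Δ ++ L) C w -> deriv G (j :: L) C w) ->
  (forall L'', ms_eq (Δ ++ l) ((X, x) :: L'') -> deriv G (L1 ++ L'') C w) ->
  deriv G (L1 ++ L') C w.
Proof.
  intros Hms Hprincipal Hj Hrule Hcut; eapply cut_left_rule; eauto using commute_left_local.
Qed.
Arguments cut_left_local Δ {G L1 l L' j X x C w}.

Lemma commute_tensorR (G L1 La Lb Lr : list judg) X x A B w :
  deriv G La A w -> (forall L', ms_eq La ((X, x) :: L') -> deriv G (L1 ++ L') A w) ->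
  deriv G Lb B w -> (forall L', ms_eq Lb ((X, x) :: L') -> deriv G (L1 ++ L') B w) ->
  ms_eq (La ++ Lb) ((X, x) :: Lr) -> deriv G (L1 ++ Lr) (Tensor A B) w.
Proof.
  intros HA HcutA HB HcutB Hms.
  destruct (ms_eq_app_cons_inv _ _ Hms) as [[La' [Hl Hr]] | [Lb' [Hl Hr]]].
  - eapply deriv_ms_eq; [exact (d_tensorR (HcutA _ Hl) HB) |].
    rewrite <- app_assoc; apply ms_eq_app_l, Hr.
  - eapply deriv_ms_eq; [exact (d_tensorR HA (HcutB _ Hl)) |].
    eapply ms_eq_trans; [apply ms_eq_perm, Permutation_app_swap_app | apply ms_eq_app_l, Hr].
Qed.
Arguments commute_tensorR {G L1 La Lb Lr X x A B w}.

Lemma commute_lolliL (G L1 La Lb l3 : list judg) X x A B u C w :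
  deriv G La A u -> (forall L', ms_eq La ((X, x) :: L') -> deriv G (L1 ++ L') A u) ->
  deriv G ((B, u) :: Lb) C w ->
  (forall L', ms_eq ((B, u) :: Lb) ((X, x) :: L') -> deriv G (L1 ++ L') C w) ->
  ms_eq (La ++ Lb) ((X, x) :: l3) -> deriv G ((Lolli A B, u) :: L1 ++ l3) C w.
Proof.
  intros HA HcutA HB HcutB Hms.
  destruct (ms_eq_app_cons_inv _ _ Hms) as [[La' [Hl Hr]] | [Lb' [Hl Hr]]].
  - eapply deriv_ms_eq; [exact (d_lolliL (HcutA _ Hl) HB) |].
    apply ms_eq_cons; [apply jeq_refl |]; rewrite <- app_assoc; apply ms_eq_app_l, Hr.
  - eapply deriv_ms_eq; [exact (d_lolliL HA (commute_cons HcutB Hl)) |].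
    apply ms_eq_cons; [apply jeq_refl |].
    eapply ms_eq_trans; [apply ms_eq_perm, Permutation_app_swap_app | apply ms_eq_app_l, Hr].
Qed.
Arguments commute_lolliL {G L1 La Lb l3 X x A B u C w}.

Section CommutativeCuts.
Variables k N : nat.
Hypothesis IH : cut_height k N.

Lemma cut_right_premise n2 (G L2 : list judg) C w n1 L1 X x :
  derivh n2 G L2 C w -> derivh n1 G L1 X x -> size X <= S k ->
  (forall j L C w, left_rule G j L C w -> jeq j (X, x) -> deriv G (L1 ++ L) C w) ->
  n1 + n2 <= S N -> forall L', ms_eq L2 ((X, x) :: L') -> deriv G (L1 ++ L') C w.
Proof.
  intros d2 d1 Hs Hprincipal Hn.
  assert (Hcut : forall m L C w, derivh m G L C w -> S m <= n2 ->
                   forall L', ms_eq L ((X, x) :: L') -> deriv G (L1 ++ L') C w)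
    by (intros; eapply IH; eauto; lia).
  revert d1 Hprincipal Hn Hcut; destruct d2; intros d1 Hprincipal Hn Hcut Lr Hms;
    try solve [exfalso; eapply ms_eq_nil_cons; eauto];
    try solve [econstructor; eapply Hcut; eauto].
  - eapply (cut_left_rule Hms Hprincipal); [apply L_init |].
    intros l3 Hl; exfalso; eapply ms_eq_nil_cons; eauto.
  - eapply deriv_copy_jeq with (j := (A, u)); [eassumption .. |].
    exact (commute_cons (Hcut _ _ _ _ d2 (le_n _)) Hms).
  - exact (commute_tensorR (derivh_deriv d2_1) (Hcut _ _ _ _ d2_1 (le_n _))
                           (derivh_deriv d2_2) (Hcut _ _ _ _ d2_2 (le_n _)) Hms).
  - eapply (cut_left_local [(A, u); (B, u)] Hms Hprincipal);
      eauto using L_tensor, derivh_deriv, d_tensorL.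
  - eapply (cut_left_local [] Hms Hprincipal); eauto using L_one, derivh_deriv, d_oneL.
  - apply d_lolliR; exact (commute_cons (Hcut _ _ _ _ d2 (le_n _)) Hms).
  - eapply (cut_left_rule Hms Hprincipal); [eauto using L_lolli, derivh_deriv |].
    intros l3 Hl; exact (commute_lolliL (derivh_deriv d2_1) (Hcut _ _ _ _ d2_1 (le_n _))
                                        (derivh_deriv d2_2) (Hcut _ _ _ _ d2_2 (le_n _)) Hl).
  - eapply (cut_left_rule Hms Hprincipal); [apply L_zero | intros; apply d_zeroL].
  - eapply (cut_left_local [(A, u)] Hms Hprincipal); eauto using L_with1, derivh_deriv, d_withL1.
  - eapply (cut_left_local [(B, u)] Hms Hprincipal); eauto using L_with2, derivh_deriv, d_withL2.
  - eapply (cut_left_rule Hms Hprincipal); [eauto using L_plus, derivh_deriv |].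
    intros l3 Hl; apply d_plusL.
    + exact (commute_cons (Hcut _ _ _ _ d2_1 (le_n _)) Hl).
    + exact (commute_cons (Hcut _ _ _ _ d2_2 (le_n _)) Hl).
  - apply d_allTR; rewrite map_app.
    eapply IH; [apply derivh_shiftt, d1 | eassumption | lia | rewrite size_psubt; exact Hs |].
    exact (ms_eq_jshiftt Hms).
  - eapply (cut_left_local [(psubt (tsingle t) A, u)] Hms Hprincipal);
      eauto using L_allT, derivh_deriv, d_allTL.
  - eapply (cut_left_rule Hms Hprincipal); [eauto using L_exT, derivh_deriv |].
    intros l3 Hl; apply d_exTL; rewrite map_app.
    eapply commute_cons; [intros; eapply IH | exact (ms_eq_jshiftt Hl)];
      [apply derivh_shiftt, d1 | eassumption | lia | rewrite size_psubt; exact Hs | eassumption].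
  - apply d_allWR; rewrite map_app.
    eapply IH; [apply derivh_shiftw, d1 | eassumption | lia | rewrite size_psubw; exact Hs |].
    exact (ms_eq_jshiftw Hms).
  - eapply (cut_left_local [(psubw (wsingle v) A, u)] Hms Hprincipal);
      eauto using L_allW, derivh_deriv, d_allWL.
  - eapply (cut_left_rule Hms Hprincipal); [eauto using L_exW, derivh_deriv |].
    intros l3 Hl; apply d_exWL; rewrite map_app.
    eapply commute_cons; [intros; eapply IH | exact (ms_eq_jshiftw Hl)];
      [apply derivh_shiftw, d1 | eassumption | lia | rewrite size_psubw; exact Hs | eassumption].
  - eapply (cut_left_rule Hms Hprincipal); [eauto using L_bang, derivh_deriv |].
    intros l3 Hl; apply d_bangL.
    eapply IH; [eapply derivh_weaken; [exact d1 | apply subctx_cons_r] | eassumption | lia |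
                exact Hs | exact Hl].
  - eapply (cut_left_local [(A, u)] Hms Hprincipal); eauto using L_at, derivh_deriv, d_atL.
  - eapply (cut_left_local [(psubw (wsingle v) A, v)] Hms Hprincipal);
      eauto using L_down, derivh_deriv, d_downL.
  - eapply d_conv; [| apply set_eq_refl | apply ms_eq_refl | eassumption ..].
    eapply IH; [exact d1 | eapply derivh_weaken; eauto using set_eq_subctx | lia | exact Hs |].
    eapply ms_eq_trans; eassumption.
Qed.

End CommutativeCuts.

Lemma cut_height_all k N : linear_cut_upto k -> unrestricted_cut_upto k -> cut_height k N.
Proof.
  intros Hlin Hunr; induction N as [|N IHN].
  { intros n1 G L1 A u d1; destruct d1; intros; lia. }
  intros n1 G L1 A u d1 n2 L2 C w d2 Hn Hs L' Hms.
  assert (Hcut : forall m L, derivh m G L A u -> S m <= n1 -> deriv G (L ++ L') C w)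
    by (intros; eapply IHN; eauto; lia).
  (* When [d1] ends with a right rule the cut formula is principal in it, and
     the induction proceeds on [d2]; otherwise the cut moves above [d1]. *)
  pose proof d1 as h; revert d1 d2 Hn Hs Hms Hcut; destruct h; intros d1 d2 Hn Hs Hms Hcut;
    try solve [eapply (cut_right_premise IHN d2 d1); [exact Hs | | lia | exact Hms];
               intros; eapply cut_principal; eauto; econstructor; eauto using derivh_deriv].
  - eapply deriv_copy_jeq; [eassumption .. | apply (Hcut _ _ h (le_n _))].
  - apply d_tensorL, (Hcut _ _ h (le_n _)).
  - apply d_oneL, (Hcut _ _ h (le_n _)).
  - simpl; rewrite <- app_assoc.
    apply d_lolliL; [exact (derivh_deriv h1) | apply (Hcut _ _ h2 (le_n _))].
  - apply d_zeroL.
  - apply d_withL1, (Hcut _ _ h (le_n _)).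
  - apply d_withL2, (Hcut _ _ h (le_n _)).
  - apply d_plusL; [apply (Hcut _ _ h1 (le_n _)) | apply (Hcut _ _ h2 (le_n _))].
  - eapply d_allTL, (Hcut _ _ h (le_n _)).
  - apply d_exTL; rewrite map_app.
    apply (IHN _ _ _ _ _ h _ _ _ _ (derivh_shiftt d2));
      [lia | rewrite size_psubt; exact Hs | exact (ms_eq_jshiftt Hms)].
  - eapply d_allWL, (Hcut _ _ h (le_n _)).
  - apply d_exWL; rewrite map_app.
    apply (IHN _ _ _ _ _ h _ _ _ _ (derivh_shiftw d2));
      [lia | rewrite size_psubw; exact Hs | exact (ms_eq_jshiftw Hms)].
  - apply d_bangL.
    eapply IHN; [exact h | eapply derivh_weaken; [exact d2 | apply subctx_cons_r] | lia |
                 exact Hs | exact Hms].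
  - apply d_atL, (Hcut _ _ h (le_n _)).
  - apply d_downL, (Hcut _ _ h (le_n _)).
  - eapply deriv_ms_eq; [eapply IHN | apply ms_eq_app; [eassumption | apply ms_eq_refl]].
    + eapply derivh_weaken; [exact h | apply set_eq_subctx; eassumption].
    + exact d2.
    + lia.
    + erewrite size_peq; eassumption.
    + eapply ms_eq_trans; [exact Hms | apply ms_eq_head, jeq_pair; auto using peq_sym, weq_sym].
Qed.

Lemma unrestricted_cut_of_linear k : linear_cut_upto k -> unrestricted_cut_upto k.
Proof.
  intros Hlin X Hs G2 L C w G1 x d2; revert X Hs G1 x.
  induction d2; intros X Hs G1 x Hsub HX; try solve [econstructor; eauto].
  - eapply d_conv; [eapply IHd2 | apply set_eq_refl | eassumption ..]; eauto.
    eapply subctx_trans; [apply set_eq_subctx |]; eassumption.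
  - destruct (Hsub _ H) as [j [[<- | Hj] Hjx]].
    + eapply Hlin with (L1 := []); eauto using ms_eq_head.
    + eapply deriv_copy_jeq; eauto using jeq_sym.
  - rewrite <- (size_psubt X tsh) in Hs; apply d_allTR.
    exact (IHd2 _ Hs _ x (subctx_jshiftt Hsub) (deriv_subst_tm tsh HX)).
  - rewrite <- (size_psubt X tsh) in Hs; apply d_exTL.
    exact (IHd2 _ Hs _ x (subctx_jshiftt Hsub) (deriv_subst_tm tsh HX)).
  - rewrite <- (size_psubw X wsh) in Hs; apply d_allWR.
    exact (IHd2 _ Hs _ (wshift x) (subctx_jshiftw Hsub) (deriv_subst_world wsh HX)).
  - rewrite <- (size_psubw X wsh) in Hs; apply d_exWL.
    exact (IHd2 _ Hs _ (wshift x) (subctx_jshiftw Hsub) (deriv_subst_world wsh HX)).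
  - apply d_bangL, (IHd2 X Hs _ x); [apply subctx_swap, Hsub |].
    eapply deriv_weaken; [exact HX | apply subctx_cons_r].
Qed.

Lemma linear_cut_all k : linear_cut_upto k.
Proof.
  induction k as [|k IHk].
  - intros A Hs; pose proof (size_gt0 A); lia.
  - intros A Hs G L1 u L2 L' C w d1 d2 Hms.
    destruct (deriv_derivh d1) as [n1 h1], (deriv_derivh d2) as [n2 h2].
    eapply (cut_height_all (N := n1 + n2) IHk (unrestricted_cut_of_linear IHk)); eauto.
Qed.

End HyLLCut.

Theorem theorem1 (D : cdomain) (Fs Ps : Type) :
  forall (G L L' : list (judg D Fs Ps)) (A C : prop D Fs Ps) (u w : wexp D),
    (deriv G L A u -> deriv G ((A, u) :: L') C w -> deriv G (L ++ L') C w) /\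
    (deriv G [] A u -> deriv ((A, u) :: G) L C w -> deriv G L C w).
Proof.
  intros G L L' A C u w.
  pose proof (@linear_cut_all D Fs Ps (size A)) as Hlin.
  split; intros HA HC.
  - exact (Hlin A (le_n _) _ _ _ _ _ _ _ HA HC (ms_eq_refl _)).
  - exact (unrestricted_cut_of_linear Hlin (le_n _) HC (subctx_refl _) HA).
Qed.
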